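(* Let $\mathcal{H}$ be an unrestricted tree-to-tree Hennie machine with input alphabet $\Xi$ and $\mathcal{R}$ a bottom-up relabeler from $\Sigma$ to $\Xi$. One can effectively construct a uTHM $\mathcal{H}'$ with input alphabet $\Sigma$ such that $[\![\mathcal{H}']\!]=[\![\mathcal{H}]\!]\circ[\![\mathcal{R}]\!]$. Moreover, for every $L\subseteq T_\Sigma$, if $\mathcal{H}$ is bounded-visit on $[\![\mathcal{R}]\!](L)$, then $\mathcal{H}'$ is bounded-visit on $L$.
   Context: Trees: ranked alphabets are finite sets with a rank function to $\mathbb{N}$; $T_\Sigma$ is the set of finite ordered $\Sigma$-labeled trees where a node labeled $\sigma$ has $\mathrm{rank}(\sigma)$ children (nodes are words over positive integers, root $\varepsilon$, $i$-th child of $u$ is $ui$); $T_\Sigma[Y]$ allows extra rank-$0$ leaves labeled in $Y$. A bottom-up relabeler $\mathcal{R}$ from $\Sigma$ to $\Xi$ consists of a deterministic bottom-up tree automaton (finite states $P$, maps $\delta[\sigma]:P^{\mathrm{rank}\sigma}\to P$, extended to trees by $\delta[\sigma(t_1,..,t_k)]=\delta[\sigma](\delta[t_1],..,\delta[t_k])$) and a rank-preserving map $\rho:\Sigma\times P\to\Xi$; $[\![\mathcal{R}]\!](\sigma(t_1,..,t_k))=\rho(\sigma,\delta[\sigma(t_1,..,t_k)])([\![\mathcal{R}]\!](t_1),..,[\![\mathcal{R}]\!](t_k))$. Hennie machines: a uTHM is $(Q,M,\top,\Sigma,\Gamma,q_{init},\delta)$ with finite states $Q$, finite memory symbols $M\ni\top$,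 $q_{init}\in Q$, partial $\delta:Q\times\Sigma\times M\rightharpoonup T_\Gamma[Q\times M\times D]$, $D=\{\uparrow,1,..,\max\mathrm{rank}\Sigma\}$, leaves $(q',m',d)$ of $\delta(q,\sigma,m)$ having $d\in\{\uparrow,1,..,\mathrm{rank}\sigma\}$. Configurations on $t$ are $(u,q,\mu)$, $\mu:$ nodes$\to M$, initially $(\varepsilon,q_{init},\text{constant }\top)$; the step of $(u,q,\mu)$ is $\delta(q,\mathrm{lab}_t(u),\mu(u))$ with each leaf $(q',m',d)$ replaced by $(ud,q',\mu[u\mapsto m'])$ ($ud$ the parent if $d=\uparrow$, else the $d$-th child; undefined if nonexistent). Confluent rewriting of configuration leaves by steps from the initial configuration yields the output in $T_\Gamma$, if any. A branch-outputting run is $C_0,..,C_n$ with $C_0$ initial and $C_{i+1}$ a leaf label of the step of $C_i$. The machine is bounded-visit on $L$ if some $N$ bounds, for all $t\in L$, runs on $t$ and nodes $u$, the number of $i$ with $C_i$ positioned at $u$. *)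

From mathcomp Require Import all_boot.
From Stdlib Require Import Relations.
From Stdlib Require List.

Set Implicit Arguments.
Unset Strict Implicit.
Unset Printing Implicit Defensive.

Record rankedAlphabet := RankedAlphabet {
  sym :> finType;
  rank : sym -> nat
}.

(* finite ordered labelled trees (not yet constrained by ranks) *)
Inductive tree (A : Type) : Type := Node of A & seq (tree A).
Arguments Node {A}.

Fixpoint wr (A : Type) (rk : A -> nat) (t : tree A) : bool :=
  let: Node a ts := t in
  (size ts == rk a) &&
  (fix wrs (l : seq (tree A)) : bool :=
     match l with [::] => true | s :: l' => wr rk s && wrs l' end) ts.

Definition inT (S : rankedAlphabet) (t : tree S) : bool := wr (@rank S) t.

Definition rankY (G : rankedAlphabet) (Y : Type) (x : G + Y) : nat :=
  match x with inl g => rank g | inr _ => 0 end.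
Definition inTY (G : rankedAlphabet) (Y : Type) (t : tree (G + Y)) : bool :=
  wr (@rankY G Y) t.

Fixpoint tmap (A B : Type) (f : A -> B) (t : tree A) : tree B :=
  let: Node a ts := t in
  Node (f a) ((fix go (l : seq (tree A)) : seq (tree B) :=
                 match l with [::] => [::] | s :: l' => tmap f s :: go l' end) ts).

Fixpoint labels (A : Type) (t : tree A) : seq A :=
  let: Node a ts := t in
  a :: (fix go (l : seq (tree A)) : seq A :=
          match l with [::] => [::] | s :: l' => labels s ++ go l' end) ts.

(* nodes are words over positive integers; the i-th child of u is rcons u i *)
Fixpoint subtree (A : Type) (t : tree A) (u : seq nat) : option (tree A) :=
  match u with
  | [::] => Some t
  | i :: u' =>
      let: Node _ ts := t in
      match i with
      | 0 => None
      | i'.+1 => if i' < size ts then subtree (nth t ts i') u' else None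
      end
  end.

Definition lab (A : Type) (t : tree A) (u : seq nat) : option A :=
  omap (fun s => let: Node a _ := s in a) (subtree t u).

Record relabeler (S X : rankedAlphabet) := Relabeler {
  rl_P : finType;
  (* delta[sigma] : P^(rank sigma) -> P, given on state sequences
     (only applied to sequences of length rank sigma on ranked trees) *)
  rl_delta : S -> seq rl_P -> rl_P;
  rl_rho : S -> rl_P -> X
}.
Arguments rl_delta {S X} r _ _.
Arguments rl_rho {S X} r _ _.

Definition wf_relabeler (S X : rankedAlphabet) (R : relabeler S X) : Prop :=
  forall (s : S) (p : rl_P R), rank (rl_rho R s p) = rank s.

Fixpoint rl_state (S X : rankedAlphabet) (R : relabeler S X) (t : tree S)
  : rl_P R :=
  let: Node s ts := t in
  rl_delta R s ((fix go (l : seq (tree S)) : seq (rl_P R) :=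
                   match l with [::] => [::] | t' :: l' => rl_state R t' :: go l' end) ts).

Fixpoint relabel (S X : rankedAlphabet) (R : relabeler S X) (t : tree S)
  : tree X :=
  let: Node s ts := t in
  Node (rl_rho R s (rl_state R t))
       ((fix go (l : seq (tree S)) : seq (tree X) :=
           match l with [::] => [::] | t' :: l' => relabel R t' :: go l' end) ts).

(* Directions D: None = "up", Some i = i-th child (1-based). *)
Definition dir := option nat.

Record uTHM (S G : rankedAlphabet) := UTHM {
  th_Q : finType;
  th_M : finType;
  th_top : th_M;
  th_qinit : th_Q;
  th_delta : th_Q -> S -> th_M -> option (tree (G + (th_Q * th_M * dir)))
}.
Arguments th_top {S G} u.
Arguments th_qinit {S G} u.
Arguments th_delta {S G} u _ _ _.

Definition wf_uTHM (S G : rankedAlphabet) (H : uTHM S G) : Prop :=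
  forall q (s : S) m r, th_delta H q s m = Some r ->
    inTY r /\
    forall q' m' d, List.In (inr (q', m', d)) (labels r) ->
      if d is Some i then (1 <= i <= rank s) else true.

Section Semantics.
Variables (S G : rankedAlphabet) (H : uTHM S G).

Definition config : Type := (seq nat * th_Q H * (seq nat -> th_M H))%type.

Definition init_config : config := ([::], th_qinit H, fun _ => th_top H).

Definition move (t : tree S) (u : seq nat) (d : dir) : option (seq nat) :=
  match d with
  | None => if u is [::] then None else Some (take (size u).-1 u)
  | Some i => if subtree t (rcons u i) is Some _ then Some (rcons u i) else None
  end.

Definition upd (mu : seq nat -> th_M H) (u : seq nat) (m : th_M H) :=
  fun w => if w == u then m else mu w.

(* config trees: output symbols, and leaves carrying configurations
   (inr None marks an undefined configuration) *)
Definition ctree := tree (G + option config).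

Definition step (t : tree S) (c : config) : option ctree :=
  let: (u, q, mu) := c in
  match lab t u with
  | None => None
  | Some s =>
      match th_delta H q s (mu u) with
      | None => None
      | Some r =>
          Some (tmap (fun x => match x with
                               | inl g => inl g
                               | inr (q', m', d) =>
                                   inr (omap (fun u' => (u', q', upd mu u m'))
                                             (move t u d))
                               end) r)
      end
  end.

Inductive rew1 (t : tree S) : ctree -> ctree -> Prop :=
| rew_leaf c ts r : step t c = Some r -> rew1 t (Node (inr (Some c)) ts) r
| rew_ctx a l s s' l' : rew1 t s s' ->
    rew1 t (Node a (l ++ s :: l')) (Node a (l ++ s' :: l')).

Definition sem (t : tree S) (o : tree G) : Prop :=
  clos_refl_trans _ (rew1 t) (Node (inr (Some init_config)) [::])
                  (tmap (fun g => inl g) o).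

Definition is_run (t : tree S) (cs : seq config) : Prop :=
  (exists c0 cs', cs = c0 :: cs' /\ c0 = init_config) /\
  forall i, i.+1 < size cs ->
    exists r, step t (nth init_config cs i) = Some r /\
      List.In (inr (Some (nth init_config cs i.+1))) (labels r).

Definition pos (c : config) : seq nat := c.1.1.

Definition bounded_visit (L : tree S -> Prop) : Prop :=
  exists N : nat, forall t, L t -> forall cs, is_run t cs ->
    forall u : seq nat, count (fun c => pos c == u) cs <= N.

End Semantics.

(* The relabeled symbol at a node is determined by the input symbol and the
   bottom-up state of the relabeler there.  The new machine therefore first
   runs a depth-first traversal that stores every node's state in the node's
   memory; the traversal outputs nothing, is the same on every run, and visits
   each node at most [max_rank + 1] times (once on entry and once on returning
   from each child).  Afterwards it simulates [H] step for step, reading the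
   relabeled symbol off the stored state: mapping configurations to those of
   [H] turns the rewriting of configuration trees of one machine into that of
   the other, in both directions, so the outputs agree, and every run is the
   traversal followed by (the image of) a run of [H] on the relabeled tree. *)

From mathcomp Require Import all_boot.
From Stdlib Require Import Relations FunctionalExtensionality.
From Stdlib Require List.

Set Implicit Arguments.
Unset Strict Implicit.
Unset Printing Implicit Defensive.

Lemma Forall_nth T (P : T -> Prop) (s : seq T) x0 i :
  List.Forall P s -> i < size s -> P (nth x0 s i).
Proof.
elim: s i => [|y s IH] [|i] // /List.Forall_cons_iff [Hy Hs] /= Hi //.
exact: IH.
Qed.

Lemma Forall_eq_map T U (f g : T -> U) (s : seq T) :
  List.Forall (fun x => f x = g x) s -> map f s = map g s.
Proof. by elim=> //= x l -> _ ->. Qed.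

Lemma map_eq_cat_cons A B (f : A -> B) (ts : seq A) (l : seq B) (s : B) (l' : seq B) :
  map f ts = l ++ s :: l' ->
  exists l1 s1 l1', [/\ ts = l1 ++ s1 :: l1', map f l1 = l, f s1 = s & map f l1' = l'].
Proof.
elim: l ts => [|y l IH] [|z ts] //= [<- E]; first by exists [::], z, ts.
by have [l1 [s1 [l1' [-> <- <- <-]]]] := IH _ E; exists (z :: l1), s1, l1'.
Qed.

Lemma rcons_not_prefix (T : eqType) (u : seq T) x : ~~ prefix (rcons u x) u.
Proof. by apply/negP => /size_prefix; rewrite size_rcons ltnn. Qed.

Lemma prefix_rcons_inj (T : eqType) (u w : seq T) i j :
  prefix (rcons u i) w -> prefix (rcons u j) w -> i = j.
Proof.
move=> /prefixP [a ->] /prefixP [b E].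
have := congr1 (fun s => nth i s (size u)) E.
by rewrite /= !nth_cat !size_rcons ltnSn !nth_rcons ltnn eqxx.
Qed.

Lemma not_prefix_neq (T : eqType) (u w : seq T) : ~~ prefix u w -> (w == u) = false.
Proof. by apply: contraNF => /eqP ->; apply: prefix_refl. Qed.

Lemma cat_eqself (T : eqType) (u v : seq T) : (u ++ v == u) = (v == [::]).
Proof. by rewrite -[X in _ == X]cats0 eqseq_cat // eqxx. Qed.

Lemma tree_nested_ind A (P : tree A -> Prop) :
  (forall a ts, List.Forall P ts -> P (Node a ts)) -> forall t, P t.
Proof.
move=> IH; fix F 1 => -[a ts]; apply: IH.
by elim: ts => [|x l Hl]; constructor.
Qed.

Lemma tmapE A B (f : A -> B) a ts :
  tmap f (Node a ts) = Node (f a) (map (tmap f) ts).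
Proof. by rewrite /=; congr Node; elim: ts => //= x l ->. Qed.

Lemma labelsE A (a : A) ts : labels (Node a ts) = a :: flatten (map (@labels A) ts).
Proof. by rewrite /=; congr cons; elim: ts => //= x l ->. Qed.

Lemma wrE A (rk : A -> nat) a ts :
  wr rk (Node a ts) = (size ts == rk a) && all (wr rk) ts.
Proof. by rewrite /=; congr andb; elim: ts => //= x l ->. Qed.

Section Trees.
Variable A : Type.

Lemma tmap_comp B C (f : B -> C) (g : A -> B) t :
  tmap f (tmap g t) = tmap (f \o g) t.
Proof.
elim/tree_nested_ind: t => a ts IH.
rewrite (tmapE g) (tmapE f) (tmapE (f \o g)) -map_comp; congr Node.
exact: Forall_eq_map.
Qed.

Lemma tmap_ext B (f g : A -> B) t :
  (forall x, List.In x (labels t) -> f x = g x) -> tmap f t = tmap g t.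
Proof.
elim/tree_nested_ind: t => a ts IH Hx; rewrite !tmapE labelsE in Hx *.
congr Node; first by apply: Hx; left.
elim: ts IH Hx => //= x l IHl /List.Forall_cons_iff [H1 H2] Hx; congr cons.
  by apply: H1 => y Hy; apply: Hx; right; apply/List.in_app_iff; left.
apply: IHl => // y [<-|Hy]; first by apply: Hx; left.
by apply: Hx; right; apply/List.in_app_iff; right.
Qed.

Lemma In_labels_tmap B (f : A -> B) t x :
  List.In x (labels t) -> List.In (f x) (labels (tmap f t)).
Proof.
elim/tree_nested_ind: t => a ts IH; rewrite tmapE !labelsE /= => -[->|]; first by left.
move=> Hx; right; elim: ts IH Hx => //= y l IHl /List.Forall_cons_iff [H1 H2].
by move/List.in_app_iff => [Hx|Hx]; apply/List.in_app_iff; [left; exact: H1 | right; exact: IHl].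
Qed.

Lemma In_labels_tmap_inv B (f : A -> B) t y :
  List.In y (labels (tmap f t)) -> exists2 x, List.In x (labels t) & y = f x.
Proof.
elim/tree_nested_ind: t => a ts IH.
rewrite tmapE !labelsE /= => -[<-|]; first by exists a => //; left.
elim: ts IH => //= x l IHl /List.Forall_cons_iff [H1 H2].
move/List.in_app_iff => [/H1 [z Hz ->]|/(IHl H2) [z [<-|Hz] ->]].
- by exists z => //; right; apply/List.in_app_iff; left.
- by exists a => //; left.
- by exists z => //; right; apply/List.in_app_iff; right.
Qed.

Lemma In_labels_child (a : A) l (s : tree A) l' x :
  List.In x (labels s) -> List.In x (labels (Node a (l ++ s :: l'))).
Proof.
by rewrite labelsE /= map_cat flatten_cat /= => H; right; rewrite !List.in_app_iff; right; left.
Qed.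

Lemma In_labels_replace (a : A) l (s s' : tree A) l' x :
  List.In x (labels (Node a (l ++ s' :: l'))) ->
  List.In x (labels s') \/ List.In x (labels (Node a (l ++ s :: l'))).
Proof.
rewrite !labelsE /= !map_cat !flatten_cat /= => -[->|]; first by right; left.
rewrite !List.in_app_iff; tauto.
Qed.

Lemma subtree_cat (t : tree A) u tu v :
  subtree t u = Some tu -> subtree t (u ++ v) = subtree tu v.
Proof.
elim: u t => [|i u IH] [a ts] /=; first by case=> ->.
by case: i => // i; case: ifP => // _; apply: IH.
Qed.

Lemma subtree_rcons (t : tree A) u a ts i :
  subtree t u = Some (Node a ts) -> i < size ts ->
  subtree t (rcons u i.+1) = Some (nth (Node a ts) ts i).
Proof. by move=> Hs Hi; rewrite -cats1 (subtree_cat _ Hs) /= Hi. Qed.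

Lemma wr_subtree (rk : A -> nat) (t : tree A) u tu :
  wr rk t -> subtree t u = Some tu -> wr rk tu.
Proof.
elim: u t => [|i u IH] [a ts]; first by move=> ? [<-].
rewrite wrE /=; case: i => // i; case: ifP => // Hi /andP [_ /(all_nthP (Node a ts)) Ha].
exact/IH/Ha.
Qed.

End Trees.

Lemma wr_tmap A B (rk : A -> nat) (rk' : B -> nat) (f : A -> B) t :
  (forall x, rk' (f x) = rk x) -> wr rk' (tmap f t) = wr rk t.
Proof.
move=> Hr; elim/tree_nested_ind: t => a ts IH.
rewrite tmapE (wrE rk') (wrE rk) size_map Hr all_map; congr andb.
by elim: ts IH => //= x l IHl /List.Forall_cons_iff [-> /IHl ->].
Qed.

Section Relabeling.
Variables (S X : rankedAlphabet) (R : relabeler S X).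

Lemma rl_stateE s ts : rl_state R (Node s ts) = rl_delta R s (map (rl_state R) ts).
Proof. by rewrite /=; congr rl_delta; elim: ts => //= x l ->. Qed.

Lemma relabelE s ts :
  relabel R (Node s ts) = Node (rl_rho R s (rl_state R (Node s ts))) (map (relabel R) ts).
Proof. by rewrite [LHS]/=; congr Node; elim: ts => //= x l ->. Qed.

Lemma subtree_relabel t u : subtree (relabel R t) u = omap (relabel R) (subtree t u).
Proof.
elim: u t => [|i u IH] [s ts] //; rewrite relabelE /=.
case: i => // i; rewrite size_map; case: ifP => // Hi.
by rewrite (nth_map (Node s ts)) // IH.
Qed.

Lemma lab_relabel t u s ts : subtree t u = Some (Node s ts) ->
  lab (relabel R t) u = Some (rl_rho R s (rl_state R (Node s ts))).
Proof. by rewrite /lab subtree_relabel => ->. Qed.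

Lemma lab_relabel_None t u : subtree t u = None -> lab (relabel R t) u = None.
Proof. by rewrite /lab subtree_relabel => ->. Qed.

Lemma move_relabel t u d : move (relabel R t) u d = move t u d.
Proof. by case: d => //= i; rewrite subtree_relabel; case: (subtree t (rcons u i)). Qed.

End Relabeling.

Section Runs.
Variables (S G : rankedAlphabet) (M : uTHM S G) (t : tree S).

Local Notation config := (config M).
Local Notation rew := (clos_refl_trans _ (@rew1 _ _ M t)).

Definition cleaf (c : config) : ctree M := Node (inr (Some c)) [::].

Lemma rew1_cleaf c T : rew1 t (cleaf c) T -> step t c = Some T.
Proof.
move E: (cleaf c) => T0 Hr; case: Hr E => [c' ts r Hs [-> _] //|a l s s' l' _ [_]].
by case: l.
Qed.

Lemma rew_cleaf_step c T : rew (cleaf c) T -> T <> cleaf c ->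
  exists2 r, step t c = Some r & rew r T.
Proof.
move/clos_rt_rt1n_iff => Hr; inversion Hr; subst => // _.
by exists y; [apply: rew1_cleaf | apply/clos_rt_rt1n_iff].
Qed.

Lemma move_child u s ts i : subtree t u = Some (Node s ts) -> i < size ts ->
  move t u (Some i.+1) = Some (rcons u i.+1).
Proof. by move=> Hs Hi; rewrite /move (subtree_rcons Hs Hi). Qed.

Lemma move_parent u i : move t (rcons u i) None = Some u.
Proof.
rewrite /move; case E: (rcons u i) => [|x l]; first by case: u E.
by rewrite -E size_rcons /= -cats1 take_size_cat.
Qed.

Lemma step_cleaf u q mu s q' m' d u' :
  lab t u = Some s -> th_delta M q s (mu u) = Some (Node (inr (q', m', d)) [::]) ->
  move t u d = Some u' -> step t (u, q, mu) = Some (cleaf (u', q', upd mu u m')).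
Proof. by rewrite /step => -> -> /= ->. Qed.

Fixpoint leaf_path (x : config) (cs : seq config) : Prop :=
  if cs is y :: cs' then step t x = Some (cleaf y) /\ leaf_path y cs' else True.

Fixpoint branch_path (x : config) (cs : seq config) : Prop :=
  if cs is y :: cs' then
    (exists2 r, step t x = Some r & List.In (inr (Some y)) (labels r)) /\ branch_path y cs'
  else True.

Lemma leaf_path_cat x cs1 cs2 :
  leaf_path x (cs1 ++ cs2) <-> leaf_path x cs1 /\ leaf_path (last x cs1) cs2.
Proof. by elim: cs1 x => [|y cs IH] x /=; [tauto | rewrite IH; tauto]. Qed.

Lemma leaf_path_rew x cs Z : leaf_path x cs -> (forall c, Z <> cleaf c) ->
  rew (cleaf x) Z <-> rew (cleaf (last x cs)) Z.
Proof.
elim: cs x => [|y cs IH] x //= [Hs Hp] HZ; rewrite -IH //; split.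
  by move/rew_cleaf_step => /(_ (HZ x)) [r]; rewrite Hs => -[<-].
by apply: rt_trans; apply/rt_step/rew_leaf.
Qed.

Lemma branch_pathP d x cs : branch_path x cs <->
  (forall i, i < size cs -> exists r, step t (nth d (x :: cs) i) = Some r /\
     List.In (inr (Some (nth d (x :: cs) i.+1))) (labels r)).
Proof.
elim: cs x => //= y cs IH x; rewrite IH; split.
  by move=> [[r Hr Hy] Hst] [|i] Hi; [exists r | apply: Hst].
by move=> Hst; split => [|i /(Hst i.+1)] //; have [r [Hr Hy]] := Hst 0 erefl; exists r.
Qed.

Lemma is_run_branch cs : is_run t cs <->
  exists2 cs', cs = init_config M :: cs' & branch_path (init_config M) cs'.
Proof.
split; first by case=> -[_ [cs' [-> ->]]] /(branch_pathP _ _ cs').2; exists cs'.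
by move=> [cs' -> /(branch_pathP (init_config M))]; split=> //; exists (init_config M), cs'.
Qed.

Lemma leaf_path_branch x p cs : leaf_path x p -> branch_path x cs ->
  (exists p', p = cs ++ p') \/ exists2 cs', cs = p ++ cs' & branch_path (last x p) cs'.
Proof.
elim: p x cs => [|y p IH] x cs /=; first by right; exists cs.
case: cs => [|z cs] [Hs Hp]; first by left; exists (y :: p).
case=> -[r]; rewrite Hs => -[<-] [] // [<-] Hb.
by case: (IH y cs Hp Hb) => [[p' ->]|[cs' -> Hb']]; [left; exists p' | right; exists cs'].
Qed.

End Runs.

Section Visits.
Variable K : nat.

(* [u] is entered once and re-entered from each of its first [j] children; the
   nodes below those children are visited at most [K.+1] times each. *)
Definition visit_bound (u : seq nat) (j : nat) (w : seq nat) : nat :=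
  if w == u then j.+1
  else if has (fun i => prefix (rcons u i.+1) w) (iota 0 j) then K.+1 else 0.

Lemma visit_bound0 u w : count_mem w [:: u] <= visit_bound u 0 w.
Proof. by rewrite /visit_bound /= addn0 eq_sym; case: eqP. Qed.

Lemma visit_boundS u j (P Pc : seq (seq nat)) w :
  (forall w, count_mem w P <= visit_bound u j w) ->
  (forall w, count_mem w Pc <= if prefix (rcons u j.+1) w then K.+1 else 0) ->
  count_mem w (P ++ Pc ++ [:: u]) <= visit_bound u j.+1 w.
Proof.
move=> HP HPc; have := HP w; have := HPc w.
rewrite !count_cat /= addn0 /visit_bound eq_sym.
have -> : iota 0 j.+1 = iota 0 j ++ [:: j] by rewrite -addn1 iotaD.
rewrite has_cat /= orbF.
have [->|_] := eqVneq w u.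
  by rewrite (negbTE (rcons_not_prefix u j.+1)) leqn0 => /eqP -> Hu; rewrite addn1.
case Hj: (prefix (rcons u j.+1) w) => /= HcPc; last first.
  by move: HcPc; rewrite leqn0 => /eqP ->; rewrite add0n addn0 orbF.
have -> : has (fun i => prefix (rcons u i.+1) w) (iota 0 j) = false.
  apply/hasPn => i; rewrite mem_iota => /andP [_ Hi]; apply/negP => Hiw.
  by have [Eij] := prefix_rcons_inj Hiw Hj; rewrite Eij ltnn in Hi.
by rewrite leqn0 => /eqP ->; rewrite addn0.
Qed.

Lemma visit_bound_le u j w : j <= K ->
  visit_bound u j w <= if prefix u w then K.+1 else 0.
Proof.
rewrite /visit_bound => HjK; case: eqP => [->|_]; first by rewrite prefix_refl.
case: hasP => // -[i _ Hi].
by rewrite (prefix_trans (prefix_rcons u i.+1) Hi).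
Qed.

End Visits.

Definition wf_rhs (S G : rankedAlphabet) (Q M : Type) (s : S)
    (r : tree (G + (Q * M * dir))) : Prop :=
  inTY r /\ forall q m d, List.In (inr (q, m, d)) (labels r) ->
    if d is Some i then 1 <= i <= rank s else true.

Section Construction.
Variables (Sigma Xi Gamma : rankedAlphabet) (H : uTHM Xi Gamma) (R : relabeler Sigma Xi).

Definition max_rank : nat := \max_(s : Sigma) rank s.

Local Notation P := (rl_P R).
Local Notation K := max_rank.

(* State [Down b] enters a node ([b] marks the root), [Up p] returns from a
   child in relabeler state [p], and [Sim q] simulates [H] in state [q].  Next
   to the memory of [H], a node stores during the traversal the root flag and
   the states of the children traversed so far ([inl]), and afterwards its own
   state ([inr]). *)
Definition cstate : finType := ((bool + P) + th_Q H)%type.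
Definition cmem : finType := (th_M H * option ((bool * K.-bseq P) + P))%type.

Definition Down b : cstate := inl (inl b).
Definition Up p : cstate := inl (inr p).
Definition Sim q : cstate := inr q.

Definition pending b (ls : seq P) : cmem := (th_top H, Some (inl (b, insub_bseq K ls))).
Definition done p : cmem := (th_top H, Some (inr p)).

Definition crhs := tree (Gamma + (cstate * cmem * dir)).

Definition single (x : cstate * cmem * dir) : crhs := Node (inr x) [::].

Definition sim_label p (x : Gamma + (th_Q H * th_M H * dir)) : Gamma + (cstate * cmem * dir) :=
  match x with
  | inl g => inl g
  | inr (q, m, d) => inr (Sim q, (m, Some (inr p)), d)
  end.

Definition sim_rhs q (s : Sigma) m p : option crhs :=
  omap (tmap (sim_label p)) (th_delta H q (rl_rho R s p) m).

Definition finish b (s : Sigma) (ls : seq P) : option crhs :=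
  let p := rl_delta R s ls in
  if b then sim_rhs (th_qinit H) s (th_top H) p else Some (single (Up p, done p, None)).

Definition resume b (s : Sigma) (ls : seq P) : option crhs :=
  if size ls < rank s then Some (single (Down false, pending b ls, Some (size ls).+1))
  else finish b s ls.

Definition relabel_delta (q : cstate) (s : Sigma) (m : cmem) : option crhs :=
  match q, m.2 with
  | inl (inl b), _ => resume b s [::]
  | inl (inr p), Some (inl (b, ls)) => resume b s (rcons ls p)
  | inr q, Some (inr p) => sim_rhs q s m.1 p
  | _, _ => None
  end.

Definition relabel_uTHM : uTHM Sigma Gamma :=
  @UTHM Sigma Gamma cstate cmem (th_top H, None) (Down true) relabel_delta.

Lemma rank_le_max (s : Sigma) : rank s <= K.
Proof. exact: (leq_bigmax (F := fun s : Sigma => @rank Sigma s)). Qed.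

Lemma relabel_delta_pending p s b ls : size ls <= K ->
  relabel_delta (Up p) s (pending b ls) = resume b s (rcons ls p).
Proof. by move=> Hls; rewrite /= insubdK // unfold_in. Qed.

Lemma wf_single (s : Sigma) x :
  (if x.2 is Some i then 1 <= i <= rank s else true) -> wf_rhs s (single x).
Proof. by case: x => -[q m] d Hd; split => // q' m' d' [[_ _ <-]|]. Qed.

Lemma wf_sim_rhs q s m p r : wf_uTHM H -> wf_relabeler R ->
  sim_rhs q s m p = Some r -> wf_rhs s r.
Proof.
rewrite /sim_rhs => wH wR; case E: th_delta => [r0|] //= [<-].
have [Hi Hd] := wH _ _ _ _ E; split.
  rewrite /inTY (wr_tmap (rk := @rankY Gamma _)) //.
  by case=> [|[[]]].
move=> q' m' d /(In_labels_tmap_inv (f := sim_label p)) [[g|[[q0 m0] d0]] Hx] //= [_ _ ->].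
by have := Hd _ _ _ Hx; rewrite wR.
Qed.

Lemma wf_finish b s ls r : wf_uTHM H -> wf_relabeler R ->
  finish b s ls = Some r -> wf_rhs s r.
Proof. by case: b => wH wR /=; [apply: wf_sim_rhs | move=> [<-]; apply: wf_single]. Qed.

Lemma wf_resume b s ls r : wf_uTHM H -> wf_relabeler R ->
  resume b s ls = Some r -> wf_rhs s r.
Proof. by rewrite /resume; case: ifP => [Hs _ _ [<-]|_]; [apply: wf_single | apply: wf_finish]. Qed.

Lemma wf_relabel_uTHM : wf_uTHM H -> wf_relabeler R -> wf_uTHM relabel_uTHM.
Proof.
move=> wH wR q s [m a] r.
by case: q => [[b|p]|q]; case: a => [[[b' ls]|p']|] //=; [apply: wf_resume.. | apply: wf_sim_rhs].
Qed.

End Construction.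

Section Simulation.
Variables (Sigma Xi Gamma : rankedAlphabet) (H : uTHM Xi Gamma) (R : relabeler Sigma Xi).
Variable t : tree Sigma.

Local Notation HR := (relabel_uTHM H R).
Local Notation rewR := (clos_refl_trans _ (@rew1 _ _ HR t)).
Local Notation rewH := (clos_refl_trans _ (@rew1 _ _ H (relabel R t))).

Definition proj (c : config HR) : config H :=
  (pos c, (if c.1.2 is inr q then q else th_qinit H), fun w => (c.2 w).1).

Definition lift (x : Gamma + option (config HR)) : Gamma + option (config H) :=
  match x with inl g => inl g | inr oc => inr (omap proj oc) end.

Definition annotated (mu : seq nat -> cmem H R) (w : seq nat) : Prop :=
  forall tw, subtree t w = Some tw -> (mu w).2 = Some (inr (rl_state R tw)).

Definition simulating (c : config HR) : Prop :=
  (exists q, c.1.2 = Sim R q) /\ forall w, annotated c.2 w.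

Definition simulating_tree (T : ctree HR) : Prop :=
  forall c, List.In (inr (Some c)) (labels T) -> simulating c.

Definition simulates (c : config HR) (d : config H) : Prop :=
  step (relabel R t) d = omap (tmap lift) (step t c) /\
  forall r, step t c = Some r -> simulating_tree r.

Lemma simulates_sim_rhs u s ts q' mu q muH :
  subtree t u = Some (Node s ts) ->
  relabel_delta q' s (mu u) = sim_rhs q s (muH u) (rl_state R (Node s ts)) ->
  (forall w, w != u -> muH w = (mu w).1) ->
  (forall w, w != u -> annotated mu w) ->
  simulates (u, q', mu) (u, q, muH).
Proof.
move=> Hsub Hd HmuH Hmu; rewrite /simulates /step (lab_relabel R Hsub) /lab Hsub /= Hd /sim_rhs.
case: (th_delta H q _ _) => [r0|] //=; split.
  congr Some; rewrite !tmap_comp; apply: tmap_ext => -[g|[[q0 m0] d0]] _ //=.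
  rewrite move_relabel; case: (move t u d0) => //= u'.
  congr (inr (Some (_, _, _))); apply: functional_extensionality => w.
  by rewrite /upd /=; case: eqP => // /eqP; apply: HmuH.
move=> r [<-] c Hc; have [x Hx Ex] := In_labels_tmap_inv Hc.
have [y Hy Ey] := In_labels_tmap_inv Hx; subst x; clear Hx.
case: y Hy Ex => [g|[[q0 m0] d0]] //= _.
case: (move t u d0) => //= u' [->]; split; first by exists q0.
move=> w tw /=; rewrite /upd; case: eqP => [->|/eqP Hw]; first by rewrite Hsub => -[<-].
exact: Hmu.
Qed.

Lemma simulating_simulates c : simulating c -> simulates c (proj c).
Proof.
case: c => [[u _] mu] [[q /= ->] Hann].
case Es: (subtree t u) => [[s ts]|].
  by apply: (simulates_sim_rhs Es) => //; rewrite /= (Hann _ _ Es).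
by rewrite /simulates /step /proj /= lab_relabel_None // /lab Es.
Qed.

Lemma rew1_lift T1 T2 : rew1 t T1 T2 -> simulating_tree T1 ->
  rew1 (relabel R t) (tmap lift T1) (tmap lift T2) /\ simulating_tree T2.
Proof.
elim=> [c ts r Hs|a l s s' l' Hr IH] Hg.
  have [E1 E2] := simulating_simulates (Hg c (or_introl erefl)).
  by split; [rewrite tmapE /=; apply: rew_leaf; rewrite E1 Hs | apply: E2].
have [IH1 IH2] := IH (fun c Hc => Hg c (In_labels_child a l l' Hc)).
split; first by rewrite !tmapE !map_cat /=; apply: rew_ctx.
by move=> c /(In_labels_replace s) [Hc|Hc]; [apply: IH2 | apply: Hg].
Qed.

Lemma rew1_lift_inv T1 T2 : rew1 (relabel R t) T1 T2 ->
  forall T1', T1 = tmap lift T1' -> simulating_tree T1' ->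
  exists2 T2', rew1 t T1' T2' & T2 = tmap lift T2'.
Proof.
elim=> [c ts r Hs|a l s s' l' Hr IH] [a' ts']; rewrite tmapE => -[Ea Ets] Hg.
  case: a' Ea Hg => [g|[c'|]] //= [Ec] Hg.
  have [E1 _] := simulating_simulates (Hg c' (or_introl erefl)).
  move: E1; rewrite -Ec Hs; case Es: (step t c') => [r'|] //= [->].
  by exists r'; first by apply: rew_leaf.
have [l1 [s1 [l1' [Ets' El Es El']]]] := map_eq_cat_cons (esym Ets); subst ts'.
have [s2 Hr2 Es2] := IH s1 (esym Es) (fun c Hc => Hg c (In_labels_child a' l1 l1' Hc)).
exists (Node a' (l1 ++ s2 :: l1')); first exact: rew_ctx.
by rewrite tmapE map_cat /= El El' Es2 Ea.
Qed.

Lemma rew_lift T1 T2 : rewR T1 T2 -> simulating_tree T1 ->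
  rewH (tmap lift T1) (tmap lift T2) /\ simulating_tree T2.
Proof.
elim=> [x y Hxy|x|x y z _ IH1 _ IH2] Hg.
- by have [Hr Hy] := rew1_lift Hxy Hg; split => //; apply: rt_step.
- by split => //; apply: rt_refl.
- by have [Hxy /IH2 [Hyz Hz]] := IH1 Hg; split => //; apply: rt_trans Hyz.
Qed.

Lemma rew_lift_inv T1 T2 : rewH T1 T2 ->
  forall T1', T1 = tmap lift T1' -> simulating_tree T1' ->
  exists2 T2', rewR T1' T2' & T2 = tmap lift T2'.
Proof.
move/clos_rt_rt1n_iff; elim=> [x|x y z Hxy _ IH] T1' E Hg.
  by exists T1'; first by apply: rt_refl.
have [y' Hy' Ey] := rew1_lift_inv Hxy E Hg.
have [z' Hz' Ez] := IH y' Ey (proj2 (rew1_lift Hy' Hg)).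
by exists z'; first by apply: rt_trans (rt_step _ _ _ _ Hy') Hz'.
Qed.

Lemma lift_output T (o : tree Gamma) : tmap lift T = tmap inl o -> T = tmap inl o.
Proof.
elim/tree_nested_ind: o T => g os IH [a ts]; rewrite !tmapE => -[Ea Ets].
case: a Ea => [g'|[c|]] //= [->]; congr Node.
elim: os ts IH Ets => [|o os IHo] [|x ts] //= /List.Forall_cons_iff [H1 H2] [Ex Ets].
by rewrite (H1 _ Ex) (IHo _ H2 Ets).
Qed.

Lemma simulates_rew c d (o : tree Gamma) : simulates c d ->
  rewR (cleaf c) (tmap inl o) <-> rewH (cleaf d) (tmap inl o).
Proof.
have Hout (M : uTHM _ Gamma) (e : config M) : tmap inl o <> cleaf e by case: o => g os.
move=> [Hd Hsim]; split.
  move/rew_cleaf_step => /(_ (Hout _ _ c)) [r Hr Hro].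
  have [+ _] := rew_lift Hro (Hsim r Hr); rewrite tmap_comp.
  by apply: rt_trans; apply/rt_step/rew_leaf; rewrite Hd Hr.
move/rew_cleaf_step => /(_ (Hout _ _ d)) [r]; rewrite Hd.
case Hc: (step t c) => [r'|] //= [Er] Hro.
have [T2 HT2 /esym /lift_output ET2] := rew_lift_inv Hro (esym Er) (Hsim r' Hc).
by apply: rt_trans (rt_step _ _ _ _ (rew_leaf _ Hc)) _; rewrite -ET2.
Qed.

Lemma simulates_branch c d cs : simulates c d ->
  branch_path t c cs -> branch_path (relabel R t) d (map proj cs).
Proof.
elim: cs c d => //= y cs IH c d [Hd Hsim] [[r Hr Hy] Hb]; split.
  by exists (tmap lift r); [rewrite Hd Hr | apply: (In_labels_tmap lift Hy)].
exact/IH/Hb/simulating_simulates/(Hsim r Hr).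
Qed.

End Simulation.

Section Traversal.
Variables (Sigma Xi Gamma : rankedAlphabet) (H : uTHM Xi Gamma) (R : relabeler Sigma Xi).
Variable t : tree Sigma.
Hypothesis Ht : inT t.

Local Notation HR := (relabel_uTHM H R).
Local Notation K := (max_rank Sigma).
Local Notation mem := (seq nat -> cmem H R).
Local Notation Down := (Down H R).
Local Notation Up := (@Up _ _ _ H R).
Local Notation done := (@done _ _ _ H R).
Local Notation pending := (@pending _ _ _ H R).
Local Notation resume := (@resume _ _ _ H R).
Local Notation finish := (@finish _ _ _ H R).
Local Notation states := (map (rl_state R)).
Local Notation upd := (@upd _ _ HR).
Local Notation stepR := (@step _ _ HR t).
Local Notation cleafR := (@cleaf _ _ HR).

Definition entry u b (mu : mem) : config HR := (u, Down b, mu).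

(* The traversal of the subtree [Node s ts] at [u], entered with memory [mu],
   after its first [j] children have been traversed. *)
Record traversal (u : seq nat) (s : Sigma) (ts : seq (tree Sigma)) (b : bool) (mu : mem)
    (j : nat) (cs : seq (config HR)) (q : cstate H R) (muj : mem) : Prop := {
  trav_path : leaf_path t (entry u b mu) cs;
  trav_last : last (entry u b mu) cs = (u, q, muj);
  trav_next : relabel_delta q s (muj u) = resume b s (take j (states ts));
  trav_visits : forall w,
    count_mem w (map (@pos _ _ HR) (entry u b mu :: cs)) <= visit_bound K u j w;
  trav_outside : forall w, ~~ prefix u w -> muj w = mu w;
  trav_done : forall i v tv, i < j -> subtree (nth (Node s ts) ts i) v = Some tv ->
    muj (rcons u i.+1 ++ v) = done (rl_state R tv);
  trav_top : forall w, (muj w).1 = th_top H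
}.

Lemma size_children u s ts : subtree t u = Some (Node s ts) -> size ts = rank s.
Proof. by move/(wr_subtree Ht); rewrite wrE => /andP [/eqP]. Qed.

Lemma traversal_start u s ts b mu : (forall w, (mu w).1 = th_top H) ->
  traversal u s ts b mu 0 [::] (Down b) mu.
Proof. by move=> Htop; split => //; [rewrite take0 | apply: visit_bound0]. Qed.

Lemma traversal_finish u s ts b mu cs q muj :
  subtree t u = Some (Node s ts) -> traversal u s ts b mu (size ts) cs q muj ->
  relabel_delta q s (muj u) = finish b s (states ts).
Proof.
move=> Hsub /trav_next ->.
by rewrite -(size_map (rl_state R)) take_size /resume size_map (size_children Hsub) ltnn.
Qed.

Lemma traversal_visits u s ts b mu cs q muj :
  subtree t u = Some (Node s ts) -> traversal u s ts b mu (size ts) cs q muj ->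
  forall w, count_mem w (map (@pos _ _ HR) (entry u b mu :: cs)) <= if prefix u w then K.+1 else 0.
Proof.
move=> Hsub /trav_visits Hv w; apply: leq_trans (Hv w) _.
by apply: visit_bound_le; rewrite (size_children Hsub) rank_le_max.
Qed.

Lemma traversal_done u s ts b mu cs q muj :
  traversal u s ts b mu (size ts) cs q muj ->
  forall v tv, v != [::] -> subtree (Node s ts) v = Some tv ->
  muj (u ++ v) = done (rl_state R tv).
Proof.
move=> Tr [|[|i] v] tv //= _; case: ifP => // Hi Hv.
by rewrite -cat_rcons; apply: (trav_done Tr).
Qed.

Lemma traversal_descend u s ts b mu j cs q muj :
  subtree t u = Some (Node s ts) -> j < size ts -> traversal u s ts b mu j cs q muj ->
  stepR (u, q, muj) =
    Some (cleafR (rcons u j.+1, Down false, upd muj u (pending b (take j (states ts))))).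
Proof.
move=> Hsub Hj Tr; apply: step_cleaf (move_child Hsub Hj); first by rewrite /lab Hsub.
by rewrite /= (trav_next Tr) /resume size_takel ?size_map ?(ltnW Hj) // -(size_children Hsub) Hj.
Qed.

Lemma traversal_return u i s ts mu cs q muj :
  subtree t (rcons u i) = Some (Node s ts) ->
  traversal (rcons u i) s ts false mu (size ts) cs q muj ->
  stepR (rcons u i, q, muj) =
    Some (cleafR (u, Up (rl_state R (Node s ts)),
                  upd muj (rcons u i) (done (rl_state R (Node s ts))))).
Proof.
move=> Hsub Tr; apply: step_cleaf (move_parent t u i); first by rewrite /lab Hsub.
by rewrite rl_stateE; apply: (traversal_finish Hsub Tr).
Qed.

Lemma traversal_child u s ts b mu j cs q muj sc tsc :
  subtree t u = Some (Node s ts) -> j < size ts -> nth (Node s ts) ts j = Node sc tsc ->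
  (forall nu, (forall w, (nu w).1 = th_top H) ->
     exists cs' qc muc, traversal (rcons u j.+1) sc tsc false nu (size tsc) cs' qc muc) ->
  traversal u s ts b mu j cs q muj ->
  exists cs' q' muj', traversal u s ts b mu j.+1 cs' q' muj'.
Proof.
move=> Hsub Hj Hc IHc Tr.
set uc := rcons u j.+1; set pc := rl_state R (Node sc tsc).
set nu := upd muj u (pending b (take j (states ts))).
have Hsubc : subtree t uc = Some (Node sc tsc) by rewrite /uc (subtree_rcons Hsub Hj) Hc.
have Hnu : forall w, (nu w).1 = th_top H.
  by move=> w; rewrite /nu /upd; case: eqP => //= _; apply: (trav_top Tr).
have [cs' [qc [muc Trc]]] := IHc nu Hnu.
set muj' := upd muc uc (done pc).
have Hout : forall w, ~~ prefix uc w -> muj' w = nu w.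
  by move=> w Hw; rewrite /muj' /upd (not_prefix_neq Hw) (trav_outside Trc).
exists (cs ++ entry uc false nu :: rcons cs' (u, Up pc, muj')), (Up pc), muj'; split.
- have Hdown := traversal_descend Hsub Hj Tr; have Hup := traversal_return Hsubc Trc.
  apply/leaf_path_cat; split; first exact: (trav_path Tr).
  rewrite (trav_last Tr) /= -cats1; split => //.
  by apply/leaf_path_cat; split; [apply: (trav_path Trc) | rewrite (trav_last Trc) /=].
- by rewrite last_cat /= last_rcons.
- rewrite Hout ?rcons_not_prefix // /nu /upd eqxx relabel_delta_pending; last first.
    rewrite size_takel ?size_map ?(ltnW Hj) // (leq_trans (ltnW Hj)) //.
    by rewrite (size_children Hsub) rank_le_max.
  by rewrite (take_nth (rl_state R (Node s ts))) ?size_map // (nth_map (Node s ts)) // Hc.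
- move=> w; rewrite -cat_cons -cats1 -cat_cons catA -catA !map_cat.
  apply: visit_boundS => w'; first exact: (trav_visits Tr).
  exact: traversal_visits Hsubc Trc w'.
- move=> w Hw; have Hw' : ~~ prefix uc w.
    by apply: contra Hw; apply: prefix_trans (prefix_rcons u j.+1).
  by rewrite Hout // /nu /upd (not_prefix_neq Hw) (trav_outside Tr).
- move=> i v tv; rewrite ltnS leq_eqVlt => /orP [/eqP Ei|Hi] Hv.
    subst i; rewrite Hc in Hv; have [Ev|Hv0] := eqVneq v [::].
      by move: Hv; rewrite Ev => -[<-]; rewrite cats0 /muj' /upd eqxx.
    by rewrite /muj' /upd cat_eqself (negbTE Hv0) (traversal_done Trc Hv0 Hv).
  have Hnw : ~~ prefix uc (rcons u i.+1 ++ v).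
    by apply/negP => /(prefix_rcons_inj (prefix_prefix _ v)) [Eij]; rewrite Eij ltnn in Hi.
  have Hnu' : (rcons u i.+1 ++ v == u) = false by rewrite -cats1 -catA cat_eqself.
  by rewrite Hout // /nu /upd Hnu' (trav_done Tr Hi Hv).
- by move=> w; rewrite /muj' /upd; case: eqP => //= _; apply: (trav_top Trc).
Qed.

Lemma traversal_exists tu u b mu :
  subtree t u = Some tu -> (forall w, (mu w).1 = th_top H) ->
  exists cs q muf, let: Node s ts := tu in traversal u s ts b mu (size ts) cs q muf.
Proof.
elim/tree_nested_ind: tu u b mu => s ts IH u b mu Hsub Htop.
suff: forall j, j <= size ts -> exists cs q muj, traversal u s ts b mu j cs q muj by apply.
elim=> [|j IHj] Hj; first by exists [::], (Down b), mu; apply: traversal_start.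
have [cs [q [muj Tr]]] := IHj (ltnW Hj).
case Hc: (nth (Node s ts) ts j) => [sc tsc].
apply: (traversal_child Hsub Hj Hc _ Tr) => nu Hnu.
have := Forall_nth (Node s ts) IH Hj; rewrite Hc; apply => //.
by rewrite (subtree_rcons Hsub Hj) Hc.
Qed.

End Traversal.

Section Correctness.
Variables (Sigma Xi Gamma : rankedAlphabet) (H : uTHM Xi Gamma) (R : relabeler Sigma Xi).

Local Notation HR := (relabel_uTHM H R).

Lemma root_simulated t : inT t ->
  exists2 cs, leaf_path t (init_config HR) cs &
    (forall w, count_mem w (map (@pos _ _ HR) (init_config HR :: cs)) <= (max_rank Sigma).+1) /\
    simulates t (last (init_config HR) cs) (init_config H).
Proof.
move=> Ht; case Et: t => [s ts]; rewrite -Et.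
have Hsub : subtree t [::] = Some (Node s ts) by rewrite Et.
have [cs [q [muf Tr]]] :=
  traversal_exists (H := H) (R := R) Ht true (mu := fun=> (th_top H, None)) Hsub (fun=> erefl).
exists cs; first exact: (trav_path Tr).
split; first by move=> w; have := traversal_visits Ht Hsub Tr w; rewrite prefix0s.
rewrite (trav_last Tr); apply: (simulates_sim_rhs Hsub).
- by rewrite (traversal_finish Ht Hsub Tr) /finish rl_stateE.
- by move=> w _; rewrite (trav_top Tr).
- by move=> w Hw tw; rewrite {1}Et => /(traversal_done Tr Hw) ->.
Qed.

Lemma relabel_uTHM_sem t : inT t ->
  forall o, sem HR t o <-> sem H (relabel R t) o.
Proof.
move=> Ht o; have [cs Hp [_ Hsim]] := root_simulated Ht.
apply: iff_trans (simulates_rew o Hsim).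
by apply: leaf_path_rew Hp _; case: o.
Qed.

Lemma relabel_uTHM_bounded_visit (L : tree Sigma -> Prop) :
  (forall t, L t -> inT t) ->
  bounded_visit H (fun s => exists t, L t /\ s = relabel R t) -> bounded_visit HR L.
Proof.
move=> HL [N HN]; exists (N + (max_rank Sigma).+1) => t Lt cs Hrun u.
have [csd Hp [Hvis Hsim]] := root_simulated (HL t Lt).
have [cs' -> Hb] := (is_run_branch _ _).1 Hrun.
rewrite -[count _ _](count_map (@pos _ _ HR) (pred1 u)) addnC.
case: (leaf_path_branch Hp Hb) => [[p' Ep]|[cs3 -> Hb3]].
  apply: leq_trans (leq_addr N _); apply: leq_trans (Hvis u).
  by rewrite Ep -cat_cons map_cat count_cat leq_addr.
rewrite -cat_cons map_cat count_cat leq_add //.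
have Hrun' : is_run (relabel R t) (init_config H :: map (@proj _ _ _ H R) cs3).
  by apply/is_run_branch; exists (map (@proj _ _ _ H R) cs3); last exact: simulates_branch Hsim Hb3.
apply: leq_trans (HN _ (ex_intro _ t (conj Lt erefl)) _ Hrun' u).
by rewrite /= !count_map leq_addl.
Qed.

End Correctness.

Theorem mainTheorem18 (Sigma Xi Gamma : rankedAlphabet)
  (H : uTHM Xi Gamma) (R : relabeler Sigma Xi) :
  wf_uTHM H -> wf_relabeler R ->
  { H' : uTHM Sigma Gamma |
    wf_uTHM H' /\
    (forall t : tree Sigma, inT t ->
       forall o : tree Gamma, sem H' t o <-> sem H (relabel R t) o) /\
    (forall L : tree Sigma -> Prop, (forall t, L t -> inT t) ->
       bounded_visit H (fun s => exists t, L t /\ s = relabel R t) ->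
       bounded_visit H' L) }.
Proof.
move=> wH wR; exists (relabel_uTHM H R); split; first exact: wf_relabel_uTHM.
split; [exact: relabel_uTHM_sem | exact: relabel_uTHM_bounded_visit].
Qed.
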